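(* Let $V_{ij}(s)$, $b_i(s)$, for $i=1,\dots,M$ and $j=1,\dots,N_2$, be real-analytic functions in a neighborhood $W$ of $s_0\in\mathbb{R}^{N_1}$. Denote by $\mathcal{G}$ the collection of real-analytic functions on $W\times\mathbb{R}^{N_2}$, affine in $t=(t^1,\dots,t^{N_2})$, given by $L_i(s,t):=\sum_jV_{ij}(s)t^j-b_i(s)$ for $i=1,\dots,M$. Assume that all functions in $\mathcal{G}$ vanish at $(s_0,t_0)$ for some $t_0\in\mathbb{R}^{N_2}$, and let $A:=\{(s,t)\in W\times\mathbb{R}^{N_2}: f(s,t)=0\ \forall f\in\mathcal{G}\}$. If there exists an integer $\kappa\ge0$ such that for all $s_1\in W$, $\dim\{t:(s_1,t)\in A\}=\kappa$, then $(s_0,t_0)$ is an ordinary zero of $\mathcal{G}$.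
   Context: A point $y_0\in\mathbb{R}^N$ is an ordinary zero of a family $\mathcal{G}$ of real-analytic functions near $y_0$ vanishing at $y_0$ if there exist $f_1,\dots,f_\kappa\in\mathcal{G}$ whose Jacobian matrix $(\partial f_i/\partial y^j(y_0))$ has rank $\kappa$ and such that the germ at $y_0$ of the common zero set $\{y: f(y)=0\ \forall f\in\mathcal{G}\}$ coincides with the germ at $y_0$ of $\{y:f_1(y)=\dots=f_\kappa(y)=0\}$. The dimension of the (affine) solution set $\{t:(s_1,t)\in A\}$ is its dimension as an affine subspace. *)

From HB Require Import structures.
From mathcomp Require Import all_boot all_order all_algebra.
From mathcomp Require Import all_classical all_reals all_analysis.
Set Implicit Arguments. Unset Strict Implicit. Unset Printing Implicit Defensive.
Import Order.TTheory GRing.Theory Num.Theory.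
Import numFieldNormedType.Exports.
Local Open Scope classical_set_scope.
Local Open Scope ring_scope.

(* Points of R^N are row vectors 'rV[R]_N (coordinate i of y is y 0 i). *)

(* Partial sums of a multivariate power series centred at a, over the
   boxes of multi-indices alpha with all alpha_i <= n. *)
Definition mpser_box (R : realType) (N : nat) (c : ('I_N -> nat) -> R)
    (a y : 'rV[R]_N) (n : nat) : R :=
  \sum_(alpha : {ffun 'I_N -> 'I_n.+1})
     c (fun i => nat_of_ord (alpha i)) * \prod_(i < N) (y 0 i - a 0 i) ^+ alpha i.

Definition mpser_box_abs (R : realType) (N : nat) (c : ('I_N -> nat) -> R)
    (a y : 'rV[R]_N) (n : nat) : R :=
  \sum_(alpha : {ffun 'I_N -> 'I_n.+1})
     `|c (fun i => nat_of_ord (alpha i))| * \prod_(i < N) `|y 0 i - a 0 i| ^+ alpha i.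

Definition real_analytic_at (R : realType) (N : nat) (f : 'rV[R]_N -> R)
    (a : 'rV[R]_N) : Prop :=
  exists r : R, 0 < r /\ exists c : ('I_N -> nat) -> R,
    forall y : 'rV[R]_N, `|y - a| < r ->
      cvg (mpser_box_abs c a y @ \oo) /\ (mpser_box c a y @ \oo --> f y).

Definition real_analytic_on (R : realType) (N : nat) (W : set 'rV[R]_N)
    (f : 'rV[R]_N -> R) : Prop :=
  forall a, W a -> real_analytic_at f a.

Definition jacobian (R : realType) (N k : nat) (f : 'I_k -> ('rV[R]_N -> R))
    (y0 : 'rV[R]_N) : 'M[R]_(k, N) :=
  \matrix_(p < k, j < N) ('D_(delta_mx 0 j) (f p) y0).

Definition ordinary_zero (R : realType) (N : nat) (G : set ('rV[R]_N -> R))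
    (y0 : 'rV[R]_N) : Prop :=
  exists (k : nat) (f : 'I_k -> ('rV[R]_N -> R)),
    (forall p, G (f p)) /\
    \rank (jacobian f y0) = k /\
    \forall y \near y0,
      ((forall g, G g -> g y = 0) <-> (forall p, f p y = 0)).

(* S is an affine subspace of R^n of dimension k (in particular nonempty). *)
Definition affine_dim (R : realType) (n : nat) (S : set 'rV[R]_n) (k : nat) : Prop :=
  exists (p : 'rV[R]_n) (U : 'M[R]_n),
    \rank U = k /\ S = [set p + u | u in [set u : 'rV[R]_n | (u <= U)%MS]].

(* The affine functions L_i(s,t) = sum_j V_ij(s) t^j - b_i(s), on
   R^(N1+N2) = R^N1 x R^N2 (y = row_mx s t). *)
Definition affL (R : realType) (N1 N2 M : nat)
    (V : 'I_M -> 'I_N2 -> ('rV[R]_N1 -> R)) (b : 'I_M -> ('rV[R]_N1 -> R))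
    (i : 'I_M) (y : 'rV[R]_(N1 + N2)) : R :=
  \sum_(j < N2) V i j (lsubmx y) * rsubmx y 0 j - b i (lsubmx y).

From Pilot Require Import Defs.
From HB Require Import structures.
From mathcomp Require Import all_boot all_order all_algebra.
From mathcomp Require Import all_classical all_reals all_analysis.
From mathcomp Require Import perm lra.
Import Order.TTheory GRing.Theory Num.Theory.
Import numFieldNormedType.Exports.
Set Implicit Arguments.
Unset Strict Implicit.
Unset Printing Implicit Defensive.

Local Open Scope classical_set_scope.
Local Open Scope ring_scope.

(* Writing L(s, t) = t B(s) - c(s), the fibre over s is the solution set of a
   linear system, so the dimension hypothesis says that it is nonempty and that
   rank B(s) = N2 - kappa is constant on W.  Pick k = rank B(s0) columns of B(s0)
   that are independent; the corresponding L_i have a Jacobian of rank k in the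
   t-directions.  These columns stay independent near s0 (the entries of B are
   analytic, hence continuous), and since the rank of B(s) does not grow they
   span all columns of B(s); for a consistent system the k chosen equations
   then imply all the others. *)

Lemma mx_normr_entry_le (R : realFieldType) m n (x : 'M[R]_(m, n)) i j :
  `|x i j| <= `|x|.
Proof.
rewrite [leRHS]/Num.Def.normr /= mx_normrE.
exact: (le_bigmax _ (fun ij => `|x ij.1 ij.2|) (i, j)).
Qed.

Lemma mx_normr_le (R : realFieldType) m n (x : 'M[R]_(m, n)) e :
  0 <= e -> (forall i j, `|x i j| <= e) -> `|x| <= e.
Proof.
move=> e0 xe; rewrite [leLHS]/Num.Def.normr /= mx_normrE.
by apply: bigmax_le => // -[i j] _; exact: xe.
Qed.

Section PowerSeriesEstimate.
Variables (R : realType) (N : nat) (c : ('I_N -> nat) -> R) (a y z : 'rV[R]_N).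
Variables (d rho : R).
Hypotheses (rho_gt0 : 0 < rho) (d_ge0 : 0 <= d) (d_le_rho : d <= rho).
Hypotheses (y_near : forall i, `|y 0 i - a 0 i| <= d).
Hypotheses (z_on_sphere : forall i, `|z 0 i - a 0 i| = rho).

Let c0 := c (fun _ => 0%N).

(* Every nonconstant monomial at y has some exponent alpha_i >= 1; trading one
   factor |y_i - a_i| <= d for |z_i - a_i| = rho and bounding the other
   factors by rho gives the factor d / rho. *)
Lemma mpser_box_sub_const_le n :
  `|mpser_box c a y n - c0| <= d / rho * mpser_box_abs c a z n.
Proof.
have y_le_rho i : `|y 0 i - a 0 i| <= rho := le_trans (y_near i) d_le_rho.
have rho_ge0 : 0 <= rho := ltW rho_gt0.
rewrite /mpser_box /mpser_box_abs (bigD1 [ffun=> ord0]) //=.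
rewrite [X in _ <= _ * X](bigD1 [ffun=> ord0]) //=.
have -> : (fun i : 'I_N => nat_of_ord ([ffun=> ord0 : 'I_n.+1] i)) = fun _ => 0%N.
  by apply: boolp.funext => i; rewrite ffunE.
rewrite big1 ?mulr1 => [|i _]; last by rewrite ffunE expr0.
rewrite addrC addrK mulrDr; apply: le_trans (ler_norm_sum _ _ _) _.
apply: ler_wpDl.
  rewrite !mulr_ge0 ?invr_ge0 //; apply: prodr_ge0 => i _; exact: exprn_ge0.
rewrite mulr_sumr; apply: ler_sum => alpha alpha_neq0.
rewrite normrM normr_prod mulrCA; apply: ler_wpM2l => //.
have [i alpha_i_gt0] : exists i, (0 < nat_of_ord (alpha i))%N.
  apply/existsP; apply: contraR alpha_neq0; rewrite negb_exists => /forallP alpha0.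
  by apply/eqP/ffunP => j; rewrite ffunE; apply/val_inj/eqP; rewrite /= -leqn0 leqNgt alpha0.
rewrite (bigD1 i) //= [X in _ <= _ * X](bigD1 i) //= mulrA.
apply: ler_pM; rewrite ?normrX ?exprn_ge0 //.
- exact: prodr_ge0.
- move: alpha_i_gt0; case: (nat_of_ord (alpha i)) => // m _.
  by rewrite !exprS z_on_sphere mulrA divfK ?gt_eqF // ler_pM // lerXn2r.
- apply: ler_prod => j _; rewrite normrX exprn_ge0 // z_on_sphere lerXn2r //.
Qed.

Lemma mpser_lim_sub_const_le (S l : R) :
  (forall n, mpser_box_abs c a z n <= S) ->
  mpser_box c a y @ \oo --> l -> `|l - c0| <= d / rho * S.
Proof.
move=> abs_le_S ser_l.
have dev_l : `|mpser_box c a y n - c0| @[n --> \oo] --> `|l - c0|.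
  by apply: cvg_norm; apply: cvgB => //; exact: cvg_cst.
rewrite -(cvg_lim _ dev_l) //; apply: limr_le; first by apply/cvg_ex; exists `|l - c0|.
apply: nearW => n; apply: le_trans (mpser_box_sub_const_le n) _.
by rewrite ler_wpM2l ?divr_ge0 ?(ltW rho_gt0).
Qed.

End PowerSeriesEstimate.

Lemma real_analytic_at_continuous (R : realType) N (f : 'rV[R]_N -> R) a :
  real_analytic_at f a -> {for a, continuous f}.
Proof.
move=> [r [r_gt0 [c ser_f]]].
pose rho := r / 2; pose z := a + const_mx rho.
have rho_gt0 : 0 < rho by rewrite divr_gt0.
have rho_lt_r : rho < r by rewrite /rho; lra.
have z_on_sphere i : `|z 0 i - a 0 i| = rho by rewrite !mxE addrC addKr gtr0_norm.
have z_in_ball : `|z - a| < r.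
  apply: le_lt_trans rho_lt_r; apply: mx_normr_le (ltW rho_gt0) _ => i j.
  by rewrite !mxE ord1 addrC addKr gtr0_norm.
have [S [_ S_bnd]] := cvg_seq_bounded (proj1 (ser_f z z_in_ball)).
pose K := `|S| + 1.
have K_gt0 : 0 < K by rewrite /K ltr_wpDl.
have S_lt_K : S < K by rewrite /K (le_lt_trans (ler_norm S)) // ltrDl.
have abs_le_K n : mpser_box_abs c a z n <= K.
  exact: le_trans (ler_norm _) (S_bnd K S_lt_K n I).
have dev_le (y : 'rV[R]_N) (d : R) :
    0 <= d <= rho -> (forall i, `|y 0 i - a 0 i| <= d) ->
    `|f y - c (fun _ => 0%N)| <= d / rho * K.
  move=> /andP[d_ge0 d_le_rho] y_near.
  have y_in_ball : `|y - a| < r.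
    apply: le_lt_trans rho_lt_r; apply: mx_normr_le (ltW rho_gt0) _ => i j.
    by rewrite ord1 !mxE (le_trans (y_near j)).
  apply: (mpser_lim_sub_const_le rho_gt0 d_ge0 d_le_rho y_near z_on_sphere abs_le_K).
  exact: (proj2 (ser_f y y_in_ball)).
have fa : f a = c (fun _ => 0%N).
  apply/eqP; rewrite -subr_eq0 -normr_le0.
  have := dev_le a 0; rewrite !mul0r; apply => [|i]; first by rewrite lexx ltW.
  by rewrite subrr normr0.
apply/(@cvgrPdist_le _ _ _ (nbhs a)) => e e_gt0.
pose d := Num.min rho (e * rho / K).
have d_gt0 : 0 < d by rewrite lt_min rho_gt0 /= !divr_gt0 ?mulr_gt0.
have d_le_rho : d <= rho by rewrite ge_min lexx.
have dK_le_e : d / rho * K <= e.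
  by rewrite mulrAC ler_pdivrMr // -ler_pdivlMr // ge_min lexx orbT.
near=> y; rewrite fa distrC; apply: le_trans dK_le_e.
apply: dev_le => [|i]; first by rewrite (ltW d_gt0).
rewrite distrC; have := mx_normr_entry_le (a - y) 0 i; rewrite !mxE => /le_trans; apply.
by apply: ltW; near: y; exact: (@cvgr_dist_lt _ _ _ (nbhs a) _ id a cvg_id).
Unshelve. all: by end_near.
Qed.

Lemma affine_dim_solutions (R : realType) m n (B : 'M[R]_(n, m)) (c : 'rV[R]_m) k :
  affine_dim [set t : 'rV[R]_n | t *m B = c] k ->
  \rank B = (n - k)%N /\ exists p, p *m B = c.
Proof.
move=> [p [U [rankU solE]]].
have p_sol : p *m B = c.
  suff : [set t | t *m B = c] p by [].
  by rewrite solE; exists 0; [exact: sub0mx | rewrite addr0].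
have U_ker (u : 'rV[R]_n) : (u <= U)%MS = (u <= kermx B)%MS.
  rewrite sub_kermx; apply/idP/eqP => [uU | uB].
    have : [set t | t *m B = c] (p + u) by rewrite solE; exists u.
    by rewrite /= mulmxDl p_sol => /(canRL (addKr c)); rewrite addNr.
  have : [set t | t *m B = c] (p + u) by rewrite /= mulmxDl p_sol uB addr0.
  by rewrite solE => -[u' u'U /addrI <-].
have U_eq_ker : (U :=: kermx B)%MS.
  apply/eqmxP/andP; split; apply/row_subP => i;
    [rewrite -U_ker | rewrite U_ker]; exact: row_sub.
split; last by exists p.
rewrite U_eq_ker mxrank_ker in rankU.
by rewrite -rankU subKn ?rank_leq_row.
Qed.

Lemma colsub_mul_eq (F : fieldType) n m k (B : 'M[F]_(n, m)) (f : 'I_k -> 'I_m)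
    (c : 'rV[F]_m) (p t : 'rV[F]_n) :
  \rank (colsub f B) = \rank B -> p *m B = c ->
  t *m colsub f B = colsub f c -> t *m B = c.
Proof.
move=> rank_eq p_sol t_sol.
have colsubT : (colsub f B)^T = rowsub f B^T by apply/matrixP => i j; rewrite !mxE.
have B_sub : (B^T <= (colsub f B)^T)%MS.
  have sub : ((colsub f B)^T <= B^T)%MS by rewrite colsubT rowsub_sub.
  by rewrite -(mxrank_leqif_sup sub).2 !mxrank_tr rank_eq.
pose D := (B^T *m pinvmx (colsub f B)^T)^T.
have B_factor : B = colsub f B *m D.
  by apply: trmx_inj; rewrite trmx_mul trmxK mulmxKpV.
by rewrite B_factor mulmxA t_sol -p_sol -mulmx_colsub -mulmxA -B_factor.
Qed.

Lemma cvg_det (R : numFieldType) T (F : set_system T) {FF : Filter F} n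
    (A : T -> 'M[R]_n) (L : 'M[R]_n) :
  (forall i j, A x i j @[x --> F] --> L i j) -> \det (A x) @[x --> F] --> \det L.
Proof.
move=> cvgA.
rewrite (@eq_cvg _ _ F _ (fun x => \sum_(s : {perm 'I_n}) (-1) ^+ s * \prod_i A x i (s i))) //.
apply: (@cvg_big R _ +%R 0 (fun _ => true) add_continuous _ F _
  (fun (s : {perm 'I_n}) x => (-1) ^+ s * \prod_i A x i (s i))
  (fun s => (-1) ^+ s * \prod_i L i (s i))) => // s _.
apply: cvgMr.
apply: (@cvg_big R _ *%R 1 (fun _ => true) mul_continuous _ F _ (fun i x => A x i (s i))
  (fun i => L i (s i))) => i _; exact: cvgA.
Qed.

Lemma cvg_mulmx_entries (R : numFieldType) T (F : set_system T) {FF : Filter F} m n p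
    (Q : 'M[R]_(m, n)) (A : T -> 'M[R]_(n, p)) (L : 'M[R]_(n, p)) :
  (forall i j, A x i j @[x --> F] --> L i j) ->
  forall i j, (Q *m A x) i j @[x --> F] --> (Q *m L) i j.
Proof.
move=> cvgA i j; rewrite mxE; under eq_cvg do rewrite mxE.
apply: (@cvg_big R _ +%R 0 (fun _ => true) add_continuous _ F _ (fun l x => Q i l * A x l j)
  (fun l => Q i l * L l j)) => // l _.
by apply: cvgMr; exact: cvgA.
Qed.

(* If Q is a left inverse of L, det (Q *m A x) tends to det 1 = 1. *)
Lemma rank_full_col_near (R : numFieldType) T (F : set_system T) {FF : Filter F} n k
    (A : T -> 'M[R]_(n, k)) (L : 'M[R]_(n, k)) :
  (forall i j, A x i j @[x --> F] --> L i j) -> \rank L = k ->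
  \forall x \near F, \rank (A x) = k.
Proof.
move=> cvgA rankL.
have [X LX] : exists X : 'M[R]_(n, k), L^T *m X = 1%:M.
  by apply/row_freeP; rewrite /row_free mxrank_tr rankL.
have QL : X^T *m L = 1%:M by rewrite -[L]trmxK -trmx_mul LX trmx1.
have cvg_det_QA : \det (X^T *m A x) @[x --> F] --> (1 : R).
  by rewrite -(det1 R k) -QL; apply: cvg_det; exact: cvg_mulmx_entries.
apply: filterS (cvgr_neq0 _ cvg_det_QA (oner_neq0 R)) => x det_neq0.
apply/eqP; rewrite eqn_leq rank_leq_col -{1}(mxrank_unit (A := X^T *m A x)).
  exact: mxrankM_maxr.
by rewrite unitmxE unitfE.
Qed.

Lemma derive_affine_line (R : numFieldType) (V W : normedModType R) (f : V -> W)
    (a v : V) (w : W) :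
  (forall h : R, f (h *: v + a) = f a + h *: w) -> 'D_v f a = w.
Proof.
move=> f_line; apply: cvg_lim => //.
apply: (@cvg_trans _ ((fun=> w) @ 0^')); last exact: cvg_cst.
apply: near_eq_cvg; near=> h; rewrite /= f_line addrC addKr scalerA mulVf ?scale1r //.
by near: h; exact: nbhs_dnbhs_neq.
Unshelve. all: by end_near.
Qed.

Section AffineFamily.
Variables (R : realType) (N1 N2 M : nat).
Variables (V : 'I_M -> 'I_N2 -> 'rV[R]_N1 -> R) (b : 'I_M -> 'rV[R]_N1 -> R).

Definition affL_coef (s : 'rV[R]_N1) : 'M[R]_(N2, M) := \matrix_(j, i) V i j s.
Definition affL_const (s : 'rV[R]_N1) : 'rV[R]_M := \row_i b i s.

Lemma affL_row_mx i s t :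
  affL V b i (row_mx s t) = (t *m affL_coef s) 0 i - affL_const s 0 i.
Proof.
rewrite /affL row_mxKl row_mxKr !mxE; congr (_ - _).
by apply: eq_bigr => j _; rewrite !mxE mulrC.
Qed.

Lemma affL_colsub_eq0P k (f : 'I_k -> 'I_M) s t :
  (forall p, affL V b (f p) (row_mx s t) = 0) <->
  t *m colsub f (affL_coef s) = colsub f (affL_const s).
Proof.
rewrite mulmx_colsub; split => [L0 | tE p].
  apply/rowP => p; rewrite [LHS]mxE [RHS]mxE.
  by apply/eqP; rewrite -subr_eq0 -affL_row_mx L0.
have := congr1 (fun X : 'rV_k => X 0 p) tE; rewrite /= [LHS]mxE [RHS]mxE.
by rewrite affL_row_mx => ->; rewrite subrr.
Qed.

Lemma affL_family_eq0P s t :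
  (forall g, [set affL V b i | i in [set: 'I_M]] g -> g (row_mx s t) = 0) <->
  t *m affL_coef s = affL_const s.
Proof.
split => [L0 | tE g [i _ <-]]; last by rewrite affL_row_mx tE subrr.
apply/rowP => i; apply/eqP; rewrite -subr_eq0 -affL_row_mx L0 //; exact: imageT.
Qed.

Lemma derive_affL_rshift i j s t :
  'D_(delta_mx 0 (rshift N1 j)) (affL V b i) (row_mx s t) = V i j s.
Proof.
apply: derive_affine_line => h.
have e_rshift : delta_mx 0 (rshift N1 j) = row_mx 0 (delta_mx 0 j) :> 'rV[R]_(N1 + N2).
  apply/matrixP => p q; case: (split_ordP q) => q' ->.
    by rewrite row_mxEl !mxE eq_lrshift andbF.
  by rewrite row_mxEr !mxE eq_rshift.
have -> : h *: delta_mx 0 (rshift N1 j) + row_mx s t = row_mx s (t + h *: delta_mx 0 j).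
  by rewrite e_rshift scale_row_mx add_row_mx scaler0 add0r addrC.
rewrite !affL_row_mx mulmxDl -scalemxAl -rowE.
by rewrite !mxE addrAC.
Qed.

Lemma rank_jacobian_affL k (f : 'I_k -> 'I_M) s t :
  \rank (colsub f (affL_coef s)) = k ->
  \rank (Defs.jacobian (fun p => affL V b (f p)) (row_mx s t)) = k.
Proof.
move=> rank_f; set J := Defs.jacobian _ _.
have rsubJ : rsubmx J = (colsub f (affL_coef s))^T.
  by apply/matrixP => p j; rewrite !mxE derive_affL_rshift.
apply/eqP; rewrite eqn_leq rank_leq_row -[X in (X <= _)%N]rank_f -mxrank_tr -rsubJ /=.
have -> : rsubmx J = J *m rsubmx 1%:M by rewrite mulmx_rsub mulmx1.
exact: mxrankM_maxl.
Qed.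

End AffineFamily.

Theorem lemma6p2 (R : realType) (N1 N2 M : nat)
    (W : set 'rV[R]_N1) (s0 : 'rV[R]_N1)
    (V : 'I_M -> 'I_N2 -> ('rV[R]_N1 -> R)) (b : 'I_M -> ('rV[R]_N1 -> R))
    (t0 : 'rV[R]_N2) (kappa : nat) :
  open W -> W s0 ->
  (forall i j, real_analytic_on W (V i j)) ->
  (forall i, real_analytic_on W (b i)) ->
  (forall i, affL V b i (row_mx s0 t0) = 0) ->
  let G := [set affL V b i | i in [set: 'I_M]] in
  let A := [set y : 'rV[R]_(N1 + N2) |
              W (lsubmx y) /\ forall f, G f -> f y = 0] in
  (forall s1, W s1 -> affine_dim [set t | A (row_mx s1 t)] kappa) ->
  ordinary_zero G (row_mx s0 t0).
Proof.
move=> W_open W_s0 V_analytic _ _ G A dim_kappa.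
have solvable s : W s ->
    \rank (affL_coef V s) = (N2 - kappa)%N /\ exists p, p *m affL_coef V s = affL_const b s.
  move=> W_s; apply: affine_dim_solutions.
  suff -> : [set t | t *m affL_coef V s = affL_const b s] = [set t | A (row_mx s t)].
    exact: dim_kappa.
  apply/seteqP; split => t; rewrite /A /= row_mxKl; last by move=> [_ /affL_family_eq0P].
  by move=> /affL_family_eq0P.
pose f := maxrankfun (affL_coef V s0)^T.
have rank_f0 : \rank (colsub f (affL_coef V s0)) = \rank (affL_coef V s0)^T.
  have -> : colsub f (affL_coef V s0) = (rowsub f (affL_coef V s0)^T)^T.
    by apply/matrixP => i j; rewrite !mxE.
  by rewrite mxrank_tr; apply/eqP; exact: maxrowsub_free.
exists _, (fun p => affL V b (f p)); split; first by move=> p; exists (f p).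
split; first exact: rank_jacobian_affL.
have lsub_cvg : lsubmx y @[y --> row_mx s0 t0] --> s0.
  by rewrite -[X in _ --> X](row_mxKl s0 t0); exact: continuous_lsubmx.
have near_W : \forall y \near row_mx s0 t0, W (lsubmx y).
  by apply: lsub_cvg; exact: open_nbhs_nbhs.
have near_rank : \forall y \near row_mx s0 t0,
    \rank (colsub f (affL_coef V (lsubmx y))) = \rank (affL_coef V s0)^T.
  apply: (rank_full_col_near (F := nbhs (row_mx s0 t0))
    (A := fun y => colsub f (affL_coef V (lsubmx y))) _ rank_f0) => p q.
  rewrite !mxE; under eq_cvg do rewrite !mxE.
  exact: cvg_comp lsub_cvg (real_analytic_at_continuous (V_analytic _ _ _ W_s0)).
apply: filterS2 near_W near_rank => y; rewrite -[y]hsubmxK row_mxKl.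
move: (lsubmx y) (rsubmx y) => s t W_s rank_s.
rewrite /G affL_family_eq0P affL_colsub_eq0P.
split => [t_sol | t_sol]; first by rewrite mulmx_colsub t_sol.
have [rank_coef_s [p p_sol]] := solvable s W_s.
apply: colsub_mul_eq p_sol t_sol.
by rewrite rank_s rank_coef_s mxrank_tr (proj1 (solvable s0 W_s0)).
Qed.
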